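(* Let $v$ be a real random variable with $\Pr[v\in[v^{\min},v^{\max}]]=1$, where $0\le v^{\min}<v^{\max}$, and let $c\ge 0$. There exists a cdf $G\in\mathcal{G}$ such that Mechanism 1 with $G$ is truthful, i.e. $U_{\text{coop}}(G)-U_{\text{heur}}(G)>c$, if and only if $$c<E\big[\max(0,\,v-E[v])\big].$$ Moreover, whenever this inequality holds, the cdf $G^*$ of the point mass at $E[v]$ (i.e. $G^*(r)=0$ for $r<E[v]$ and $G^*(r)=1$ for $r\ge E[v]$) makes Mechanism 1 truthful. Equivalently, $\sup_{G\in\mathcal{G}}\big(U_{\text{coop}}(G)-U_{\text{heur}}(G)\big)=E[\max(0,v-E[v])]$, and this supremum is attained by $G^*$.
   Context: Setting: A principal owns an object whose (common) monetary value $v$ is unknown; $v$ has a prior distribution supported in $[v^{\min},v^{\max}]$ with $0\le v^{\min}<v^{\max}$, and $E[\cdot]$ denotes expectation with respect to this prior. A single agent, risk-neutral with quasi-linear utility, values the object at $v$ as well; initially he knows only the prior, but he can learn $v$ exactly by incurring a cost $c\ge0$. Let $\mathcal{G}$ be the set of cumulative distribution functions of probability measures on $[v^{\min},v^{\max}]$; for $G\in\mathcal{G}$ write $dG$ for the associated measure and $\widehat G(x)=\int_{v^{\min}}^{x}G(r)\,dr$. Mechanism 1 (parameters $\epsilon>0$ and $G\in\mathcal{G}$): (1) the principal secretly draws $r$: with probability $\epsilon$ uniformly on $[v^{\min},v^{\max}]$, with probability $1-\epsilon$ according to $G$; (2) the agent bids a real number $b$; (3) $r$ is revealed; if $b\ge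 r$ the agent gets the object and pays $r$ (agent's utility $v-r$), otherwise nothing happens (utility $0$). In the limit $\epsilon\to0$, define the agent's optimal expected utility when he computes $v$ (cooperative strategy, excluding the cost $c$) as $U_{\text{coop}}(G)=E\big[\sup_{b}\int_{[v^{\min},b]}(v-r)\,dG(r)\big]$, and when he does not compute $v$ (heuristic strategy, bidding based on the prior only) as $U_{\text{heur}}(G)=\sup_{b}\int_{[v^{\min},b]}(E[v]-r)\,dG(r)$. Mechanism 1 with $G$ is called truthful if $U_{\text{coop}}(G)-U_{\text{heur}}(G)>c$. *)

From Stdlib Require Import Reals Lra Classical ClassicalEpsilon.
Open Scope R_scope.

Definition Rsup (P : R -> Prop) : R :=
  match excluded_middle_informative (exists l, is_lub P l) with
  | left H => proj1_sig (constructive_indefinite_description _ H)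
  | right _ => 0
  end.

Definition RInt (f : R -> R) (a b : R) : R :=
  match excluded_middle_informative (inhabited (Riemann_integrable f a b)) with
  | left H => RiemannInt (epsilon H (fun _ => True))
  | right _ => 0
  end.

(* The prior of v, supported in [vmin,vmax], given by its expectation operator
   on continuous functions (a positive normalized linear functional; by the
   Riesz representation theorem these are exactly the Borel probability
   measures on [vmin,vmax]). *)
Definition is_expectation (vmin vmax : R) (E : (R -> R) -> R) : Prop :=
  (forall f g, continuity f -> continuity g ->
      E (fun x => f x + g x) = E f + E g) /\
  (forall (a : R) f, continuity f -> E (fun x => a * f x) = a * E f) /\
  (forall f g, continuity f -> continuity g ->
      (forall x, vmin <= x <= vmax -> f x <= g x) -> E f <= E g) /\
  E (fun _ => 1) = 1.

Definition is_cdf (vmin vmax : R) (G : R -> R) : Prop :=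
  (forall x y, x <= y -> G x <= G y) /\
  (forall x eps, eps > 0 -> exists d, d > 0 /\
      forall y, x <= y < x + d -> Rabs (G y - G x) < eps) /\
  (forall x, x < vmin -> G x = 0) /\
  (forall x, vmax <= x -> G x = 1).

Definition Ghat (vmin : R) (G : R -> R) (x : R) : R := RInt G vmin x.

(* int_{[vmin,b]} (x - r) dG(r)  (Lebesgue-Stieltjes, G(vmin-) = 0),
   written via integration by parts as (x-b) G(b) + Ghat(b). *)
Definition partial_util (vmin : R) (G : R -> R) (x b : R) : R :=
  if Rlt_dec b vmin then 0 else (x - b) * G b + Ghat vmin G b.

Definition best_util (vmin : R) (G : R -> R) (x : R) : R :=
  Rsup (fun y => exists b, y = partial_util vmin G x b).

Definition U_coop (vmin : R) (E : (R -> R) -> R) (G : R -> R) : R :=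
  E (fun v => best_util vmin G v).

Definition U_heur (vmin : R) (E : (R -> R) -> R) (G : R -> R) : R :=
  best_util vmin G (E (fun v => v)).

Definition truthful (vmin : R) (E : (R -> R) -> R) (c : R) (G : R -> R) : Prop :=
  U_coop vmin E G - U_heur vmin E G > c.

Definition Gstar (m : R) (r : R) : R := if Rlt_dec r m then 0 else 1.

From Pilot Require Import Defs.
From Stdlib Require Import Reals Lra Classical ClassicalEpsilon FunctionalExtensionality.
From Coquelicot Require Import Coquelicot.
Open Scope R_scope.

(* For a cdf G, every map x |-> partial_util G x b is nondecreasing with slope
   G b <= 1, hence so is the agent's optimal utility u = best_util G.  Such a u
   lies below u (E v) + max(0, x - E v), and integrating against the prior
   bounds U_coop - U_heur by E[max(0, v - E v)].  For the point mass at E v,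
   u is exactly x |-> max(0, x - E v), so the bound is attained. *)

Definition mono_1lipschitz (g : R -> R) : Prop :=
  forall x x', x <= x' -> g x <= g x' <= g x + (x' - x).

Lemma mono_1lipschitz_continuity g : mono_1lipschitz g -> continuity g.
Proof.
  intros Hg x eps Heps. exists eps. split; [lra|].
  intros y [_ Hy]. simpl in *. unfold R_dist in *.
  destruct (Rle_dec x y) as [Hxy|Hxy].
  - specialize (Hg x y Hxy). rewrite Rabs_right in * by lra. lra.
  - assert (Hyx : y <= x) by lra. specialize (Hg y x Hyx).
    rewrite Rabs_left1 in * by lra. lra.
Qed.

Lemma mono_1lipschitz_le_hinge g m x :
  mono_1lipschitz g -> g x <= g m + Rmax 0 (x - m).
Proof.
  intros Hg. destruct (Rle_dec x m) as [Hxm|Hxm].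
  - pose proof (Rmax_l 0 (x - m)). specialize (Hg x m Hxm). lra.
  - pose proof (Rmax_r 0 (x - m)). assert (Hmx : m <= x) by lra.
    specialize (Hg m x Hmx). lra.
Qed.

Lemma hinge_mono_1lipschitz m : mono_1lipschitz (fun x => Rmax 0 (x - m)).
Proof.
  intros x x' Hx. unfold Rmax.
  destruct (Rle_dec 0 (x - m)), (Rle_dec 0 (x' - m)); lra.
Qed.

Lemma Rsup_is_lub P l : is_lub P l -> Rsup P = l.
Proof.
  intros Hl. unfold Rsup. destruct excluded_middle_informative as [Hex|Hex].
  - destruct constructive_indefinite_description as [l' Hl']; simpl.
    exact (is_lub_u _ _ _ Hl' Hl).
  - exfalso. apply Hex. exists l. exact Hl.
Qed.

Lemma Rsup_unbounded P : ~ bound P -> Rsup P = 0.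
Proof.
  intros Hb. unfold Rsup. destruct excluded_middle_informative as [Hex|]; [|reflexivity].
  exfalso. destruct Hex as [l [Hl _]]. apply Hb. exists l. exact Hl.
Qed.

Section SupOfFamily.

Variable f : R -> R -> R.
Hypothesis f_mono_1lipschitz : forall b, mono_1lipschitz (fun x => f x b).

Let values (x : R) : R -> Prop := fun y => exists b, y = f x b.

Lemma bound_values_iff x x' : x <= x' -> bound (values x) <-> bound (values x').
Proof.
  intros Hx. split; intros [M HM].
  - exists (M + (x' - x)). intros y [b ->].
    assert (f x b <= M) by (apply HM; exists b; reflexivity).
    pose proof (f_mono_1lipschitz b x x' Hx). lra.
  - exists M. intros y [b ->].
    assert (f x' b <= M) by (apply HM; exists b; reflexivity).
    pose proof (f_mono_1lipschitz b x x' Hx). lra.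
Qed.

Lemma Rsup_family_mono_1lipschitz :
  mono_1lipschitz (fun x => Rsup (fun y => exists b, y = f x b)).
Proof.
  intros x x' Hx. fold (values x) (values x').
  destruct (classic (bound (values x))) as [Hb|Hb].
  - assert (Hb' : bound (values x')) by (apply (bound_values_iff x x' Hx); exact Hb).
    destruct (completeness (values x) Hb) as [l Hl]; [exists (f x 0), 0; reflexivity|].
    destruct (completeness (values x') Hb') as [l' Hl']; [exists (f x' 0), 0; reflexivity|].
    rewrite (Rsup_is_lub _ _ Hl), (Rsup_is_lub _ _ Hl'). split.
    + apply (proj2 Hl). intros y [b ->].
      assert (f x' b <= l') by (apply (proj1 Hl'); exists b; reflexivity).
      pose proof (f_mono_1lipschitz b x x' Hx). lra.
    + apply (proj2 Hl'). intros y [b ->].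
      assert (f x b <= l) by (apply (proj1 Hl); exists b; reflexivity).
      pose proof (f_mono_1lipschitz b x x' Hx). lra.
  - (* [Rsup] is 0 on unbounded sets; this happens at x and x' simultaneously. *)
    assert (Hb' : ~ bound (values x')) by (rewrite <- (bound_values_iff x x' Hx); exact Hb).
    rewrite (Rsup_unbounded _ Hb), (Rsup_unbounded _ Hb'). lra.
Qed.

End SupOfFamily.

Lemma cdf_range vmin vmax G : vmin < vmax -> is_cdf vmin vmax G -> forall b, 0 <= G b <= 1.
Proof.
  intros Hv [Hmono [_ [Hlow Hhigh]]] b. split.
  - destruct (Rlt_dec b vmin); [rewrite Hlow; lra|].
    rewrite <- (Hlow (vmin - 1)) by lra. apply Hmono; lra.
  - destruct (Rle_dec vmax b); [rewrite Hhigh; lra|].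
    rewrite <- (Hhigh vmax) by lra. apply Hmono; lra.
Qed.

Lemma partial_util_mono_1lipschitz vmin G b :
  0 <= G b <= 1 -> mono_1lipschitz (fun x => partial_util vmin G x b).
Proof.
  intros HG x x' Hx. unfold partial_util. destruct (Rlt_dec b vmin); nra.
Qed.

Lemma best_util_mono_1lipschitz vmin G :
  (forall b, 0 <= G b <= 1) -> mono_1lipschitz (best_util vmin G).
Proof.
  intros HG. apply (Rsup_family_mono_1lipschitz (partial_util vmin G)).
  intros b. exact (partial_util_mono_1lipschitz vmin G b (HG b)).
Qed.

Lemma continuity_cst (k : R) : continuity (fun _ => k).
Proof. apply continuity_const. intros ? ?. reflexivity. Qed.

Section Expectation.

Variables (vmin vmax : R) (E : (R -> R) -> R).
Hypothesis hE : is_expectation vmin vmax E.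

Lemma expectation_const k : E (fun _ => k) = k.
Proof.
  destruct hE as [_ [Hscal [_ Hone]]].
  replace (fun _ : R => k) with (fun _ : R => k * 1)
    by (apply functional_extensionality; intros; ring).
  rewrite Hscal, Hone by apply continuity_cst. ring.
Qed.

Lemma expectation_mean_range : vmin <= E (fun v => v) <= vmax.
Proof.
  destruct hE as [_ [_ [Hmon _]]]. split.
  - rewrite <- (expectation_const vmin) at 1.
    apply Hmon; [apply continuity_cst | exact (derivable_continuous _ derivable_id) | intros; lra].
  - rewrite <- (expectation_const vmax).
    apply Hmon; [exact (derivable_continuous _ derivable_id) | apply continuity_cst | intros; lra].
Qed.

Lemma expectation_gap_le_hinge g m :
  mono_1lipschitz g -> E g - g m <= E (fun v => Rmax 0 (v - m)).
Proof.
  intros Hg. destruct hE as [Hadd [_ [Hmon _]]].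
  pose proof (continuity_cst (g m)) as Hconst.
  pose proof (mono_1lipschitz_continuity _ (hinge_mono_1lipschitz m)) as Hhinge.
  assert (Hle : E g <= E (fun v => g m + Rmax 0 (v - m))).
  { apply Hmon.
    - exact (mono_1lipschitz_continuity _ Hg).
    - exact (continuity_plus _ _ Hconst Hhinge).
    - intros x _. exact (mono_1lipschitz_le_hinge g m x Hg). }
  rewrite (Hadd _ _ Hconst Hhinge), expectation_const in Hle. lra.
Qed.

End Expectation.

Lemma RInt_of_is_RInt f a b l : is_RInt f a b l -> Defs.RInt f a b = l.
Proof.
  intros Hf. assert (Hex : ex_RInt f a b) by (exists l; exact Hf).
  unfold Defs.RInt. destruct excluded_middle_informative as [Hint|Hnot].
  - rewrite RiemannInt_P5 with (pr2 := ex_RInt_Reals_0 _ _ _ Hex), <- RInt_Reals.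
    exact (is_RInt_unique _ _ _ _ Hf).
  - exfalso. apply Hnot. constructor. exact (ex_RInt_Reals_0 _ _ _ Hex).
Qed.

Lemma is_RInt_piecewise_const f a b k :
  a <= b -> (forall x, a < x < b -> f x = k) -> is_RInt f a b ((b - a) * k).
Proof.
  intros Hab Hf. apply (is_RInt_ext (fun _ => k)); [|exact (is_RInt_const a b k)].
  rewrite Rmin_left, Rmax_right by exact Hab. intros x Hx. symmetry. exact (Hf x Hx).
Qed.

Lemma Ghat_Gstar vmin m b :
  vmin <= m -> vmin <= b -> Ghat vmin (Gstar m) b = Rmax 0 (b - m).
Proof.
  intros Hm Hb. unfold Ghat. apply RInt_of_is_RInt.
  destruct (Rlt_dec b m) as [Hbm|Hbm].
  - rewrite Rmax_left, <- (Rmult_0_r (b - vmin)) by lra.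
    apply is_RInt_piecewise_const; [lra|].
    intros x Hx. unfold Gstar. destruct (Rlt_dec x m); lra.
  - rewrite Rmax_right by lra.
    assert (Hbelow : is_RInt (Gstar m) vmin m ((m - vmin) * 0)).
    { apply is_RInt_piecewise_const; [lra|].
      intros x Hx. unfold Gstar. destruct (Rlt_dec x m); lra. }
    assert (Habove : is_RInt (Gstar m) m b ((b - m) * 1)).
    { apply is_RInt_piecewise_const; [lra|].
      intros x Hx. unfold Gstar. destruct (Rlt_dec x m); lra. }
    replace (b - m) with (plus ((m - vmin) * 0) ((b - m) * 1)) by (cbn; ring).
    exact (is_RInt_Chasles _ _ _ _ _ _ Hbelow Habove).
Qed.

Lemma partial_util_Gstar vmin m x b :
  vmin <= m -> partial_util vmin (Gstar m) x b = (x - m) * Gstar m b.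
Proof.
  intros Hm. unfold partial_util.
  destruct (Rlt_dec b vmin) as [Hb|Hb].
  - unfold Gstar. destruct (Rlt_dec b m); [ring | lra].
  - rewrite Ghat_Gstar by lra. unfold Gstar.
    destruct (Rlt_dec b m); [rewrite Rmax_left | rewrite Rmax_right]; try lra; ring.
Qed.

Lemma best_util_Gstar vmin m x :
  vmin <= m -> best_util vmin (Gstar m) x = Rmax 0 (x - m).
Proof.
  intros Hm. unfold best_util. apply Rsup_is_lub. split.
  - intros y [b ->]. rewrite partial_util_Gstar by exact Hm. unfold Gstar.
    destruct (Rlt_dec b m); [rewrite Rmult_0_r; apply Rmax_l |
                             rewrite Rmult_1_r; apply Rmax_r].
  - intros M HM. apply Rmax_lub.
    + apply HM. exists (m - 1). rewrite partial_util_Gstar by exact Hm.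
      unfold Gstar. destruct (Rlt_dec (m - 1) m); [ring | lra].
    + apply HM. exists m. rewrite partial_util_Gstar by exact Hm.
      unfold Gstar. destruct (Rlt_dec m m); [lra | ring].
Qed.

Lemma Gstar_cdf vmin vmax m : vmin <= m <= vmax -> is_cdf vmin vmax (Gstar m).
Proof.
  intros Hm. unfold is_cdf, Gstar. split; [|split; [|split]].
  - intros x y Hxy. destruct (Rlt_dec x m), (Rlt_dec y m); lra.
  - intros x eps Heps.
    exists (if Rlt_dec x m then m - x else 1). split; [destruct (Rlt_dec x m); lra|].
    intros y Hy.
    destruct (Rlt_dec x m), (Rlt_dec y m); try lra;
      rewrite Rminus_diag, Rabs_R0; exact Heps.
  - intros x Hx. destruct (Rlt_dec x m); lra.
  - intros x Hx. destruct (Rlt_dec x m); lra.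
Qed.

Theorem theorem1 (vmin vmax c : R) (E : (R -> R) -> R)
  (hv : 0 <= vmin < vmax) (hE : is_expectation vmin vmax E) (hc : 0 <= c) :
  let Ev := E (fun v => v) in
  let bound := E (fun v => Rmax 0 (v - Ev)) in
  ((exists G, is_cdf vmin vmax G /\ truthful vmin E c G) <-> c < bound) /\
  (c < bound -> truthful vmin E c (Gstar Ev)) /\
  is_cdf vmin vmax (Gstar Ev) /\
  U_coop vmin E (Gstar Ev) - U_heur vmin E (Gstar Ev) = bound /\
  (forall G, is_cdf vmin vmax G -> U_coop vmin E G - U_heur vmin E G <= bound).
Proof.
  intros Ev bound.
  pose proof (expectation_mean_range vmin vmax E hE) as HEv. fold Ev in HEv.
  assert (Hupper : forall G, is_cdf vmin vmax G -> U_coop vmin E G - U_heur vmin E G <= bound).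
  { intros G HG. apply (expectation_gap_le_hinge vmin vmax E hE).
    apply best_util_mono_1lipschitz, (cdf_range vmin vmax); [lra | exact HG]. }
  assert (Hattained : U_coop vmin E (Gstar Ev) - U_heur vmin E (Gstar Ev) = bound).
  { unfold U_coop, U_heur. fold Ev.
    rewrite (functional_extensionality _ _ (fun v => best_util_Gstar vmin Ev v (proj1 HEv))).
    rewrite Rminus_diag, Rmax_left by lra. unfold bound. ring. }
  pose proof (Gstar_cdf vmin vmax Ev HEv) as Hcdf.
  unfold truthful. split; [split | split; [| exact (conj Hcdf (conj Hattained Hupper))]].
  - intros [G [HG Htruth]]. specialize (Hupper G HG). lra.
  - intros Hc. exists (Gstar Ev). split; [exact Hcdf | lra].
  - intros Hc. lra.
Qed.
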